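(* Let $p$ be a prime, $r\geq 0$ an integer, and $n\geq \sum_{k=1}^r p^k$ an integer. Then \[ B_{n-\sum_{k=1}^r p^k}\equiv B_{n,-r}\pmod p. \]
   Context: $B_n$ is the $n$-th Bell number. For any integer $s$, the $s$-Bell numbers are defined by $\sum_{n\geq0}B_{n,s}\frac{t^n}{n!}=e^{e^t-1+st}$. *)

From HB Require Import structures.
From mathcomp Require Import all_boot all_order all_algebra.
Set Implicit Arguments. Unset Strict Implicit. Unset Printing Implicit Defensive.
Import Order.TTheory GRing.Theory Num.Theory.
Local Open Scope ring_scope.

(* The exponential generating function e^{e^t - 1 + s t}, computed as a
   polynomial over rat that agrees with the formal power series up to
   degree N:  exp(f) with f = e^t - 1 + s t truncated at degree N, and exp
   truncated at f^N/N!.  Since f has zero constant term, the coefficients of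
   degree <= N are exact. *)
Definition egf_trunc (s : int) (N : nat) : {poly rat} :=
  \sum_(m < N.+1) ((m`!)%:R)^-1 *:
     (\sum_(1 <= j < N.+1)
        (((j`!)%:R)^-1 + (j == 1)%N%:R * s%:~R) *: 'X^j) ^+ m.

Definition sbell (n : nat) (s : int) : rat := (n`!)%:R * (egf_trunc s n)`_n.

Definition bell (n : nat) : rat := sbell n 0.

From HB Require Import structures.
From mathcomp Require Import all_boot all_order all_algebra all_field.
From mathcomp Require Import zify ring.
Set Implicit Arguments. Unset Strict Implicit. Unset Printing Implicit Defensive.
Import Order.TTheory GRing.Theory Num.Theory.
Local Open Scope ring_scope.

(* Let L be the linear form on polynomials with L(X^k) = B_k.  The Bell
   recurrence B_{n+1} = sum_i C(n,i) B_{n-i} says L(X g) = L(g(X+1)), hence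
   L((X)_k g) = L(g(X+k)) for the falling factorial (X)_k; together with the
   recurrence B_{n+1,s} = s B_{n,s} + sum_i C(n,i) B_{n-i,s}, read off the
   derivative of the generating function, it gives B_{n,s} = L((X+s)^n).
   Modulo p, (X)_p = X^p - X yields Touchard's L((X^p - X - 1) g) = 0, and the
   Frobenius lifts it to L((X^(p^k) - X - k) g) = 0.  Therefore
   L((X-r)^n) = L((X-r)^(n-p^r) (X^(p^r) - r)) = L(X (X-r)^(n-p^r))
              = L((X-r+1)^(n-p^r)),
   and induction on r turns B_{n,-r} = L((X-r)^n) into L(X^(n-p-...-p^r)). *)

Section CoefficientsBelow.
Variable R : nzRingType.
Implicit Types p q : {poly R}.

Definition eq_below (K : nat) p q := forall i, (i < K)%N -> p`_i = q`_i.

Lemma eq_belowM K p p' q q' :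
  eq_below K p p' -> eq_below K q q' -> eq_below K (p * q) (p' * q').
Proof.
move=> epp eqq i iK; rewrite !coefM; apply: eq_bigr => j _.
by rewrite epp ?eqq //; apply: leq_ltn_trans iK; rewrite ?leq_subr // -ltnS.
Qed.

Lemma eq_belowXn K p p' m : eq_below K p p' -> eq_below K (p ^+ m) (p' ^+ m).
Proof.
move=> epp; elim: m => [|m IHm]; first by move=> i _; rewrite !expr0.
by rewrite !exprS; apply: eq_belowM.
Qed.

Lemma eq_belowZ K c p p' : eq_below K p p' -> eq_below K (c *: p) (c *: p').
Proof. by move=> epp i iK; rewrite !coefZ epp. Qed.

Lemma eq_below_sum K I (r : seq I) (P : pred I) (F F' : I -> {poly R}) :
  (forall i, P i -> eq_below K (F i) (F' i)) ->
  eq_below K (\sum_(i <- r | P i) F i) (\sum_(i <- r | P i) F' i).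
Proof. by move=> eFF i iK; rewrite !coef_sum; apply: eq_bigr => j /eFF ->. Qed.

End CoefficientsBelow.

Section SBellRecurrence.
Variable s : int.

Definition exponent_coef (j : nat) : rat := ((j`!)%:R)^-1 + (j == 1)%N%:R * s%:~R.

Definition exponent_poly (N : nat) : {poly rat} :=
  \sum_(1 <= j < N.+1) exponent_coef j *: 'X^j.

Definition egf (N M : nat) : {poly rat} :=
  \sum_(m < M) ((m`!)%:R)^-1 *: exponent_poly N ^+ m.

Lemma egf_truncE N : egf_trunc s N = egf N N.+1.
Proof. by []. Qed.

Lemma coef_exponent_poly N i :
  (exponent_poly N)`_i = if (0 < i <= N)%N then exponent_coef i else 0.
Proof.
rewrite /exponent_poly coef_sum (eq_bigr (fun j => exponent_coef j * (i == j)%:R));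
  last by move=> j _; rewrite coefZ coefXn.
case: ifP => iN.
  rewrite (bigD1_seq i) ?mem_index_iota ?iota_uniq //= eqxx mulr1 big1 ?addr0 //.
  by move=> j /negbTE ji; rewrite eq_sym ji mulr0.
rewrite big1_seq // => j /andP[_]; rewrite mem_index_iota => jN.
by rewrite (_ : (i == j) = false) ?mulr0 //; apply: contraFF iN => /eqP ->.
Qed.

Lemma exponent_poly_eq_below N n :
  (n <= N)%N -> eq_below n.+1 (exponent_poly N) (exponent_poly n).
Proof.
by move=> nN i; rewrite ltnS !coef_exponent_poly => iN; rewrite iN (leq_trans iN).
Qed.

Lemma coef_exponent_polyX_lt N m i : (i < m)%N -> (exponent_poly N ^+ m)`_i = 0.
Proof.
elim: m i => [//|m IHm] i im; rewrite exprS coefM big1 // => j _.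
have [->|j_gt0] := posnP j; first by rewrite coef_exponent_poly mul0r.
by rewrite IHm ?mulr0 //; have := ltn_ord j; lia.
Qed.

Lemma coef_egf_lt N M n : (n < M)%N -> (egf N M)`_n = (egf N n.+1)`_n.
Proof.
elim: M => [//|M IHM]; rewrite ltnS leq_eqVlt => /predU1P[-> //|nM].
by rewrite /egf big_ord_recr coefD coefZ coef_exponent_polyX_lt // mulr0 addr0 IHM.
Qed.

Lemma coef_egf_stable N M n :
  (n <= N)%N -> (n < M)%N -> (egf N M)`_n = (egf n n.+1)`_n.
Proof.
move=> nN nM; rewrite coef_egf_lt //; apply: (@eq_below_sum _ n.+1) => // m _.
by apply/eq_belowZ/eq_belowXn; apply: exponent_poly_eq_below.
Qed.

Lemma deriv_egf N M : (egf N M.+1)^`() = (exponent_poly N)^`() * egf N M.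
Proof.
elim: M => [|M IHM].
  by rewrite /egf big_ord1 big_ord0 expr0 mulr0 derivZ derivC scaler0.
rewrite /egf big_ord_recr derivD -/(egf N M.+1) IHM derivZ deriv_exp /=.
rewrite [egf N M.+1]/egf big_ord_recr mulrDr /= -scalerAr -scaler_nat scalerA.
congr (_ + _ *: _); rewrite factS natrM invfM mulrAC mulVf ?mul1r //.
by rewrite pnatr_eq0.
Qed.

Lemma exponent_coef_deriv j :
  exponent_coef j.+1 *+ j.+1 = ((j`!)%:R)^-1 + (j == 0)%N%:R * s%:~R.
Proof.
rewrite /exponent_coef mulrnDl eqSS.
congr (_ + _); last by case: j => [|j]; rewrite ?mul0r ?mul0rn.
rewrite factS natrM -[in LHS]mulr_natr; field.
by rewrite pnatr_eq0 -lt0n fact_gt0 addrC natr1 pnatr_eq0.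
Qed.

Definition egf_coef n := (egf_trunc s n)`_n.

Lemma egf_coef_rec n :
  egf_coef n.+1 *+ n.+1 =
  s%:~R * egf_coef n + \sum_(j < n.+1) ((j`!)%:R)^-1 * egf_coef (n - j).
Proof.
have coef_j (j : 'I_n.+1) :
    ((exponent_poly n.+1)^`())`_j * (egf n.+1 n.+1)`_(n - j) =
    (((j`!)%:R)^-1 + (j == 0 :> nat)%:R * s%:~R) * egf_coef (n - j).
  have jn := ltn_ord j.
  rewrite coef_deriv coef_exponent_poly ifT ?exponent_coef_deriv; last by lia.
  by rewrite /egf_coef egf_truncE coef_egf_stable //; lia.
rewrite {1}/egf_coef egf_truncE -coef_deriv deriv_egf coefM.
rewrite (eq_bigr _ (fun j _ => coef_j j)).
rewrite addrC; under eq_bigr do rewrite mulrDl; rewrite big_split /=.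
congr (_ + _); rewrite big_ord_recl big1 ?addr0 /= ?mul1r ?subn0 // => j _.
by rewrite !mul0r.
Qed.

Lemma sbellE n : sbell n s = (n`!)%:R * egf_coef n.
Proof. by []. Qed.

Lemma sbell_rec n :
  sbell n.+1 s = s%:~R * sbell n s + \sum_(j < n.+1) sbell (n - j) s *+ 'C(n, j).
Proof.
rewrite !sbellE factS natrM -mulrA mulrCA [_.+1%:R * _]mulr_natl egf_coef_rec.
rewrite mulrDr mulrCA.
congr (_ + _); rewrite mulr_sumr; apply: eq_bigr => j _; rewrite sbellE.
have j_fact_neq0 : (j`!)%:R != 0 :> rat by rewrite pnatr_eq0 -lt0n fact_gt0.
rewrite -(bin_fact (ltnSE (ltn_ord j))) !natrM -mulr_natr.
by field.
Qed.

End SBellRecurrence.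

Section Umbral.
Variable R : comNzRingType.
Implicit Types (b : nat -> R) (g q : {poly R}).

Definition umbral b q : R := \sum_(i < size q) q`_i * b i.

Lemma umbral_widen b N q : (size q <= N)%N -> umbral b q = \sum_(i < N) q`_i * b i.
Proof.
move=> qN; rewrite /umbral (big_ord_widen N (fun i => q`_i * b i) qN) big_mkcond.
by apply: eq_bigr => i _; case: ltnP => // /(nth_default 0) ->; rewrite mul0r.
Qed.

Lemma umbralZ b c q : umbral b (c *: q) = c * umbral b q.
Proof.
rewrite (@umbral_widen _ (size q)) ?size_scale_leq // mulr_sumr.
by apply: eq_bigr => i _; rewrite coefZ mulrA.
Qed.

Lemma umbralD b q1 q2 : umbral b (q1 + q2) = umbral b q1 + umbral b q2.
Proof.
set N := maxn (size q1) (size q2).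
rewrite !(@umbral_widen _ N) ?leq_maxl ?leq_maxr ?size_polyD // -big_split.
by apply: eq_bigr => i _; rewrite coefD mulrDl.
Qed.

HB.instance Definition _ b :=
  GRing.isSemilinear.Build R {poly R} R _ (umbral b) (umbralZ b, umbralD b).

Lemma umbralXn b k : umbral b 'X^k = b k.
Proof.
rewrite /umbral size_polyXn big_ord_recr /= coefXn eqxx mul1r big1 ?add0r // => i _.
by rewrite coefXn (ltn_eqF (ltn_ord i)) mul0r.
Qed.

Lemma eq_umbral b b' : b =1 b' -> umbral b =1 umbral b'.
Proof. by move=> eq_b q; apply: eq_bigr => i _; rewrite eq_b. Qed.

Definition bell_recurrence b :=
  forall n, b n.+1 = \sum_(i < n.+1) b (n - i)%N *+ 'C(n, i).

Definition annihilates b h := forall q, umbral b (h * q) = 0.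

Lemma annihilatesD b h1 h2 :
  annihilates b h1 -> annihilates b h2 -> annihilates b (h1 + h2).
Proof. by move=> h1_0 h2_0 q; rewrite mulrDl raddfD /= h1_0 h2_0 addr0. Qed.

Lemma annihilatesM b h g : annihilates b h -> annihilates b (h * g).
Proof. by move=> h_0 q; rewrite -mulrA h_0. Qed.

Lemma annihilatesXn b h m : annihilates b h -> (0 < m)%N -> annihilates b (h ^+ m).
Proof. by case: m => // m h_0 _; rewrite exprS; apply: annihilatesM. Qed.

Section BellRecurrence.
Variables (b : nat -> R) (b_rec : bell_recurrence b).

Lemma umbral_XaddC1_exp n : umbral b (('X + 1) ^+ n) = b n.+1.
Proof.
rewrite exprDn raddf_sum b_rec; apply: eq_bigr => i _.
by rewrite expr1n mulr1 raddfMn /= umbralXn.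
Qed.

Lemma umbral_mulX g : umbral b ('X * g) = umbral b (g \Po ('X + 1)).
Proof.
rewrite comp_polyE raddf_sum -[X in umbral b (_ * X)](coefK g) poly_def.
rewrite mulr_sumr raddf_sum; apply: eq_bigr => i _.
by rewrite -scalerAr /= !umbralZ -exprS umbralXn umbral_XaddC1_exp.
Qed.

Lemma umbral_mul_falling k g :
  umbral b (\prod_(i < k) ('X - (i%:R)%:P) * g) = umbral b (g \Po ('X + (k%:R)%:P)).
Proof.
have polyCS i : (i.+1%:R)%:P = (i%:R)%:P + 1 :> {poly R} by rewrite -natr1 polyCD.
elim: k g => [|k IHk] g; first by rewrite big_ord0 mul1r addr0 comp_polyXr.
rewrite big_ord_recl /= subr0 -mulrA umbral_mulX rmorphM rmorph_prod /=.
under eq_bigr => i _ do rewrite comp_polyB comp_polyX comp_polyC /bump add1n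
  polyCS opprD addrACA subrr addr0.
by rewrite IHk -comp_polyA comp_polyD comp_polyX comp_polyC polyCS polyC1 addrA.
Qed.

End BellRecurrence.
End Umbral.

Lemma umbral_map (R S : comNzRingType) (f : {rmorphism R -> S})
    (b : nat -> R) (q : {poly R}) :
  f (umbral b q) = umbral (f \o b) (map_poly f q).
Proof.
rewrite [RHS](@umbral_widen _ _ (size q)) ?size_poly // rmorph_sum.
by apply: eq_bigr => i _; rewrite coef_map rmorphM.
Qed.

Lemma bell_recurrence_map (R S : comNzRingType) (f : {rmorphism R -> S})
    (b : nat -> R) :
  bell_recurrence b -> bell_recurrence (f \o b).
Proof.
by move=> b_rec n; rewrite /= b_rec rmorph_sum; apply: eq_bigr => i _; rewrite rmorphMn.
Qed.

Lemma bell_rec : bell_recurrence bell.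
Proof. by move=> n; rewrite /bell sbell_rec mul0r add0r. Qed.

Lemma sbell0 s : sbell 0 s = 1.
Proof.
by rewrite sbellE /egf_coef egf_truncE /egf big_ord1 expr0 fact0 invr1 scale1r coef1 mulr1.
Qed.

Lemma sbell_umbral n s : sbell n s = umbral bell (('X + (s%:~R)%:P) ^+ n).
Proof.
elim/ltn_ind: n => -[_|n IHn].
  by rewrite expr0 -(expr0 'X) umbralXn /bell !sbell0.
rewrite sbell_rec exprS mulrDl raddfD /= mul_polyC umbralZ -IHn // addrC.
congr (_ + _).
rewrite umbral_mulX; last exact: bell_rec.
rewrite rmorphXn /= comp_polyD comp_polyX comp_polyC addrAC exprDn raddf_sum.
by apply: eq_bigr => i _; rewrite expr1n mulr1 raddfMn /= -IHn // ltnS leq_subr.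
Qed.

Lemma bell_int n : bell n \is a Num.int.
Proof.
elim/ltn_ind: n => -[_|n IHn]; first by rewrite /bell sbell0.
by rewrite bell_rec rpred_sum // => i _; rewrite rpredMn // IHn // ltnS leq_subr.
Qed.

Definition bellz n : int := Num.floor (bell n).

Lemma bellzE n : (bellz n)%:~R = bell n.
Proof. by rewrite floorK ?bell_int. Qed.

Lemma bellz_rec : bell_recurrence bellz.
Proof.
move=> n; apply: (@intr_inj rat); rewrite bellzE bell_rec rmorph_sum.
by apply: eq_bigr => i _; rewrite rmorphMn /= bellzE.
Qed.

Lemma sbell_umbral_int n s : sbell n s = (umbral bellz (('X + s%:P) ^+ n))%:~R.
Proof.
rewrite umbral_map (eq_umbral bellzE) sbell_umbral rmorphXn rmorphD /=.
by rewrite map_polyX map_polyC.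
Qed.

Section Touchard.
Variables (p : nat) (p_pr : prime p).

Lemma Fp_expp (x : 'F_p) : x ^+ p = x.
Proof. by have := expf_card x; rewrite card_Fp. Qed.

Lemma Fp_poly_expp (q : {poly 'F_p}) : q ^+ p = q \Po 'X^p.
Proof.
have p_char : p \in [pchar {poly 'F_p}] by rewrite pchar_poly pchar_Fp.
rewrite -(pFrobenius_autE p_char) comp_polyE -[X in pFrobenius_aut _ X](coefK q).
rewrite poly_def rmorph_sum.
apply: eq_bigr => i _; rewrite -!mul_polyC rmorphM /= !pFrobenius_autE.
by rewrite -polyC_exp Fp_expp exprAC.
Qed.

Lemma Fp_poly_XsubC_exp_pk (c : 'F_p) k : ('X - c%:P) ^+ (p ^ k) = 'X^(p ^ k) - c%:P.
Proof.
elim: k => [|k IHk]; first by rewrite expn0 expr1.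
rewrite expnSr exprM IHk Fp_poly_expp comp_polyB comp_polyC rmorphXn /= comp_polyX.
by rewrite -exprM mulnC.
Qed.

Lemma Fp_falling : 'X^p - 'X = \prod_(i < p) ('X - ((i%:R : 'F_p))%:P).
Proof.
have Fp_enum_bij : bijective (fun i : 'I_p => (i%:R : 'F_p)).
  apply: inj_card_bij; last by rewrite card_Fp // card_ord.
  by move=> i j /(congr1 val) /=; rewrite !val_Fp_nat // !modn_small // => /val_inj.
have := finField_genPoly 'F_p; rewrite card_Fp // => ->.
exact: (reindex _ (onW_bij _ Fp_enum_bij)).
Qed.

Variables (b : nat -> 'F_p) (b_rec : bell_recurrence b).

(* Touchard's congruence B_{n+p} = B_{n+1} + B_n (mod p). *)
Lemma umbral_touchard q : umbral b (('X^p - 'X) * q) = umbral b q.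
Proof.
by rewrite Fp_falling umbral_mul_falling // pchar_Fp_0 // polyC0 addr0 comp_polyXr.
Qed.

Lemma annihilates_XpkBX k : annihilates b ('X^(p ^ k) - 'X - (k%:R)%:P).
Proof.
elim: k => [|k IHk].
  by move=> q; rewrite expn0 expr1 subrr polyC0 subr0 mul0r raddf0.
have -> : 'X^(p ^ k.+1) - 'X - (k.+1%:R)%:P =
    ('X^(p ^ k) - 'X - (k%:R)%:P) ^+ p + ('X^p - 'X - 1) :> {poly 'F_p}.
  rewrite Fp_poly_expp !comp_polyB comp_polyX comp_polyC rmorphXn /= comp_polyX.
  rewrite -exprM -expnS -natr1 polyCD polyC1; ring.
apply: annihilatesD.
  exact: annihilatesXn IHk (prime_gt0 p_pr).
by move=> q; rewrite mulrBl raddfB /= umbral_touchard mul1r subrr.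
Qed.

Lemma umbral_XsubC_exp r n : (\sum_(1 <= k < r.+1) p ^ k <= n)%N ->
  umbral b 'X^(n - \sum_(1 <= k < r.+1) p ^ k) = umbral b (('X - (r%:R)%:P) ^+ n).
Proof.
elim: r n => [|r IHr] n; first by rewrite big_geq // subn0 subr0.
rewrite big_nat_recr //=.
set S := (\sum_(1 <= k < r.+1) p ^ k)%N; set P := (p ^ r.+1)%N.
move=> SPn; have Pn : (P <= n)%N by rewrite (leq_trans (leq_addl _ _) SPn).
rewrite addnC subnDA IHr; last by rewrite leq_subRL // addnC.
rewrite -{2}(subnK Pn) exprD Fp_poly_XsubC_exp_pk mulrC.
rewrite -(subrK 'X ('X^P - _)) mulrDl raddfD /= [_ - 'X]addrAC annihilates_XpkBX add0r.
rewrite umbral_mulX // rmorphXn /= comp_polyB comp_polyX comp_polyC -natr1 polyCD polyC1.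
by rewrite opprD addrACA subrr addr0.
Qed.

End Touchard.

Theorem corollary4 (p r n : nat) :
  prime p ->
  (\sum_(1 <= k < r.+1) p ^ k <= n)%N ->
  exists z : int,
    bell (n - \sum_(1 <= k < r.+1) p ^ k)%N - sbell n (- (r%:Z)) = p%:R * z%:~R.
Proof.
move=> p_pr Sn; set S := (\sum_(1 <= k < r.+1) p ^ k)%N in Sn *.
set d := bellz (n - S) - umbral bellz (('X + (- r%:Z)%:P) ^+ n).
have bellFp_rec := bell_recurrence_map (intr : int -> 'F_p) bellz_rec.
have /dvdzP[z d_pz] : (p %| d)%Z.
  rewrite (dvdz_pcharf (pchar_Fp p_pr)) rmorphB /= umbral_map rmorphXn rmorphD /=.
  rewrite map_polyX map_polyC /= mulrNz polyCN -(umbral_XsubC_exp p_pr bellFp_rec Sn).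
  by rewrite umbralXn subrr.
by exists z; rewrite -bellzE sbell_umbral_int -rmorphB -/d d_pz rmorphM mulrC.
Qed.
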